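(* Let $c$ be the complex Banach space of convergent sequences with the supremum norm, and let $L\in c^*$ be $L((c_n)_n)=\lim_{n\to\infty}c_n$ (so $\|L\|=1$). Let $\epsilon>0$. If $S:c\to c$ is a finite rank bounded linear operator with $\|(S^*-I_{c^*})L\|<\epsilon$, then $\|S-I_c\|\ge 2-\epsilon$. *)

From Stdlib Require Import Reals Lra.
Open Scope R_scope.

Definition C : Type := (R * R)%type.
Definition C0 : C := (0, 0).
Definition Cadd (z w : C) : C := (fst z + fst w, snd z + snd w).
Definition Csub (z w : C) : C := (fst z - fst w, snd z - snd w).
Definition Cmul (z w : C) : C :=
  (fst z * fst w - snd z * snd w, fst z * snd w + snd z * fst w).
Definition Cmod (z : C) : R := sqrt (fst z * fst z + snd z * snd z).

Fixpoint Csum (k : nat) (f : nat -> C) : C :=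
  match k with
  | O => C0
  | S k' => Cadd (Csum k' f) (f k')
  end.

Definition seqC := nat -> C.

Definition is_lim (a : seqC) (l : C) : Prop :=
  forall e, 0 < e -> exists N : nat, forall n, (N <= n)%nat -> Cmod (Csub (a n) l) < e.

Definition convergent (a : seqC) : Prop := exists l, is_lim a l.

Definition bounded_by (a : seqC) (M : R) : Prop := forall n, Cmod (a n) <= M.

(** Operators on c are represented by functions on sequences whose behaviour
    on convergent sequences is what matters. *)
Definition maps_c (S : seqC -> seqC) : Prop :=
  forall a, convergent a -> convergent (S a).

Definition linear_on_c (S : seqC -> seqC) : Prop :=
  (forall a b, convergent a -> convergent b ->
     forall n, S (fun m => Cadd (a m) (b m)) n = Cadd (S a n) (S b n)) /\
  (forall (alpha : C) a, convergent a ->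
     forall n, S (fun m => Cmul alpha (a m)) n = Cmul alpha (S a n)).

(** ||T x|| <= r ||x|| for all x in c  (i.e. the operator norm of T on c is <= r) *)
Definition opnorm_le (T : seqC -> seqC) (r : R) : Prop :=
  forall a, convergent a -> forall M, bounded_by a M -> bounded_by (T a) (r * M).

Definition bounded_on_c (S : seqC -> seqC) : Prop := exists K, opnorm_le S K.

Definition finite_rank_on_c (S : seqC -> seqC) : Prop :=
  exists (k : nat) (v : nat -> seqC),
    (forall i, convergent (v i)) /\
    forall a, convergent a -> exists coef : nat -> C,
      forall n, S a n = Csum k (fun i => Cmul (coef i) (v i n)).

Definition minus_id (S : seqC -> seqC) : seqC -> seqC :=
  fun a n => Csub (S a n) (a n).

(** ||(S^* - I)L|| <= r, where L = lim : the functional a |-> lim (S a) - lim a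
    has norm at most r on c. *)
Definition dual_defect_le (S : seqC -> seqC) (r : R) : Prop :=
  forall a l l', convergent a -> is_lim a l -> is_lim (S a) l' ->
    forall M, bounded_by a M -> Cmod (Csub l' l) <= r * M.

(* Idea: test S - I on x = (1, ..., 1, -1, 1, ...) with -1 in a far position
   N.  Then ||x|| = 1 and lim x = 1, so lim Sx lies within eps of 1 while
   (Sx)_N lies within ||S - I|| of -1.  As S has finite rank, the image of
   the unit ball of c is uniformly Cauchy, so (Sx)_N is close to lim Sx for
   N large, whence 2 <= eps + ||S - I||.

   Every finite
   span is contained in the span of a family with bounded coordinates
   (|a_i| <= B ||sum a_i u_i||), built one vector at a time: a new vector is
   either at positive distance from the current span, and can be adjoined,
   or in its closure, hence in the span, since spans of coordinate-bounded
   families are closed (the coefficients of approximants are Cauchy).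
   Bounded coordinates reduce uniform Cauchyness of the unit ball of the span
   to that of finitely many convergent sequences. *)

From Pilot Require Import Defs.
From Stdlib Require Import Reals.
Open Scope R_scope.
From Stdlib Require Import Lra Lia Classical ClassicalEpsilon.
Require Coquelicot.Complex.
(* [Reals] exports a binomial coefficient [C]; re-import [Defs] so that [C]
   denotes its complex numbers. *)
Import Defs.

Lemma C_ext (z w : C) : fst z = fst w -> snd z = snd w -> z = w.
Proof. destruct z, w; simpl; intros; subst; reflexivity. Qed.

Ltac ceq := apply C_ext; simpl; ring.

Lemma Cmod_Coquelicot (z : C) : Cmod z = Complex.Cmod z.
Proof. unfold Cmod, Complex.Cmod; f_equal; simpl; ring. Qed.

Lemma Cmod_ge0 (z : C) : 0 <= Cmod z.
Proof. rewrite Cmod_Coquelicot; apply Complex.Cmod_ge_0. Qed.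

Lemma Cmod_add_le (z w : C) : Cmod (Cadd z w) <= Cmod z + Cmod w.
Proof. rewrite !Cmod_Coquelicot; exact (Complex.Cmod_triangle z w). Qed.

Lemma Cmod_mul (z w : C) : Cmod (Cmul z w) = Cmod z * Cmod w.
Proof. rewrite !Cmod_Coquelicot; exact (Complex.Cmod_mult z w). Qed.

Lemma Cmod_real (x : R) : Cmod (x, 0) = Rabs x.
Proof. rewrite Cmod_Coquelicot; exact (Complex.Cmod_R x). Qed.

Lemma Cmod_C0 : Cmod C0 = 0.
Proof. unfold C0; rewrite Cmod_real; apply Rabs_R0. Qed.

Lemma Cmod_sub_sym (z w : C) : Cmod (Csub z w) = Cmod (Csub w z).
Proof. unfold Cmod, Csub; simpl; f_equal; ring. Qed.

Lemma Cmod_sub_tri (a b c : C) : Cmod (Csub a c) <= Cmod (Csub a b) + Cmod (Csub b c).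
Proof.
  replace (Csub a c) with (Cadd (Csub a b) (Csub b c)) by (unfold Csub, Cadd; ceq).
  apply Cmod_add_le.
Qed.

Lemma Cmod_sub_le (z w : C) : Cmod (Csub z w) <= Cmod z + Cmod w.
Proof.
  replace (Cmod z) with (Cmod (Csub z C0)) by (f_equal; unfold Csub, C0; ceq).
  replace (Cmod w) with (Cmod (Csub C0 w)) by (rewrite Cmod_sub_sym; f_equal; unfold Csub, C0; ceq).
  apply Cmod_sub_tri.
Qed.

Lemma Cmod_sub_eq0 (z w : C) : Cmod (Csub z w) = 0 -> z = w.
Proof.
  rewrite Cmod_Coquelicot; intro H; apply Complex.Cmod_eq_0 in H.
  injection H as H1 H2; apply C_ext; lra.
Qed.

Lemma Cmod_re_im (z : C) :
  Rabs (fst z) <= Cmod z /\ Rabs (snd z) <= Cmod z /\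
  Cmod z <= Rabs (fst z) + Rabs (snd z).
Proof.
  pose proof (Complex.Rmax_Cmod z) as Hmax. rewrite <- Cmod_Coquelicot in Hmax.
  pose proof (Rmax_l (Rabs (fst z)) (Rabs (snd z))).
  pose proof (Rmax_r (Rabs (fst z)) (Rabs (snd z))).
  split; [lra | split; [lra|]].
  pose proof (Rabs_pos (fst z)); pose proof (Rabs_pos (snd z)).
  unfold Cmod. rewrite <- (sqrt_square (Rabs (fst z) + Rabs (snd z))) by lra.
  apply sqrt_le_1_alt.
  pose proof (Rsqr_abs (fst z)); pose proof (Rsqr_abs (snd z)); unfold Rsqr in *. nra.
Qed.

Lemma Csum_ext (k : nat) (f g : nat -> C) :
  (forall i, (i < k)%nat -> f i = g i) -> Csum k f = Csum k g.
Proof.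
  induction k as [|k IH]; simpl; intros H; [reflexivity|].
  rewrite IH by (intros; apply H; lia). rewrite H by lia; reflexivity.
Qed.

Lemma Csum_sub (k : nat) (f g : nat -> C) :
  Csum k (fun i => Csub (f i) (g i)) = Csub (Csum k f) (Csum k g).
Proof. induction k as [|k IH]; simpl; [|rewrite IH]; unfold Csub, Cadd, C0; ceq. Qed.

Lemma Csum_add (k : nat) (f g : nat -> C) :
  Csum k (fun i => Cadd (f i) (g i)) = Cadd (Csum k f) (Csum k g).
Proof. induction k as [|k IH]; simpl; [|rewrite IH]; unfold Cadd, C0; ceq. Qed.

Lemma Csum_scal (k : nat) (c : C) (f : nat -> C) :
  Csum k (fun i => Cmul c (f i)) = Cmul c (Csum k f).
Proof. induction k as [|k IH]; simpl; [|rewrite IH]; unfold Cmul, Cadd, C0; ceq. Qed.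

Fixpoint Rsum (k : nat) (f : nat -> R) : R :=
  match k with O => 0 | S k' => Rsum k' f + f k' end.

Lemma Rsum_le (k : nat) (f g : nat -> R) :
  (forall i, (i < k)%nat -> f i <= g i) -> Rsum k f <= Rsum k g.
Proof.
  induction k as [|k IH]; simpl; intros H; [lra|].
  pose proof (H k ltac:(lia)). enough (Rsum k f <= Rsum k g) by lra.
  apply IH; intros; apply H; lia.
Qed.

Lemma Rsum_const (k : nat) (c : R) : Rsum k (fun _ => c) = INR k * c.
Proof. induction k as [|k IH]; [simpl; ring|]. rewrite S_INR; simpl; rewrite IH; ring. Qed.

Lemma Rsum_scal (k : nat) (c : R) (f : nat -> R) :
  Rsum k (fun i => c * f i) = c * Rsum k f.
Proof. induction k as [|k IH]; simpl; [|rewrite IH]; ring. Qed.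

Lemma Cmod_Csum (k : nat) (f : nat -> C) : Cmod (Csum k f) <= Rsum k (fun i => Cmod (f i)).
Proof.
  induction k as [|k IH]; simpl; [rewrite Cmod_C0; lra|].
  pose proof (Cmod_add_le (Csum k f) (f k)); lra.
Qed.

Lemma inv_succ_pos (j : nat) : 0 < / (INR j + 1).
Proof. apply Rinv_0_lt_compat; pose proof (pos_INR j); lra. Qed.

Lemma rate_eventually_small (D e : R) :
  0 < e -> exists N, forall n, (N <= n)%nat -> D * / (INR n + 1) < e.
Proof.
  intros He. pose proof (Rabs_pos D) as HD.
  destruct (archimed_cor1 (e / (Rabs D + 1))) as [N [HN HN0]].
  { apply Rdiv_lt_0_compat; lra. }
  exists N; intros n Hn.
  assert (Hinv : / (INR n + 1) < e / (Rabs D + 1)).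
  { eapply Rle_lt_trans; [|exact HN].
    apply Rinv_le_contravar; [apply lt_0_INR; lia|].
    apply le_INR in Hn; lra. }
  assert (Hscaled : (Rabs D + 1) * / (INR n + 1) < e).
  { apply (Rmult_lt_compat_l (Rabs D + 1)) in Hinv; [|lra].
    replace ((Rabs D + 1) * (e / (Rabs D + 1))) with e in Hinv by (field; lra). exact Hinv. }
  pose proof (Rle_abs D); pose proof (inv_succ_pos n); nra.
Qed.

Lemma le_0_of_rate (x K : R) : (forall j, x <= K * / (INR j + 1)) -> x <= 0.
Proof.
  intros H. destruct (Rle_lt_dec x 0) as [|Hx]; [assumption|].
  destruct (rate_eventually_small K x Hx) as [N HN].
  specialize (HN N (le_n _)); specialize (H N); lra.
Qed.

Lemma R_complete_rate (x : nat -> R) (D : R) :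
  (forall j l, Rabs (x j - x l) <= D * (/ (INR j + 1) + / (INR l + 1))) ->
  exists lim, forall j, Rabs (x j - lim) <= D * / (INR j + 1).
Proof.
  intros H.
  assert (Hcauchy : Cauchy_crit x).
  { intros e He. destruct (rate_eventually_small D (e / 2)) as [N HN]; [lra|].
    exists N; intros n p Hn Hp; unfold R_dist.
    specialize (H n p); specialize (HN n Hn) as h1; specialize (HN p Hp) as h2; lra. }
  destruct (Rcomplete.R_complete x Hcauchy) as [lim Hlim].
  exists lim; intros j.
  destruct (Rle_lt_dec (Rabs (x j - lim)) (D * / (INR j + 1))) as [|Hgt]; [assumption|].
  exfalso. set (g := Rabs (x j - lim) - D * / (INR j + 1)).
  destruct (rate_eventually_small D (g / 2)) as [N1 HN1]; [unfold g; lra|].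
  destruct (Hlim (g / 2)) as [N2 HN2]; [unfold g; lra|].
  set (l := Nat.max N1 N2).
  specialize (HN1 l ltac:(unfold l; lia)); specialize (HN2 l ltac:(unfold l; lia)).
  unfold R_dist in HN2; specialize (H j l).
  pose proof (Rabs_triang (x j - x l) (x l - lim)) as Htri.
  replace (x j - x l + (x l - lim)) with (x j - lim) in Htri by ring.
  unfold g in *; lra.
Qed.

Lemma C_complete_rate (z : nat -> C) (D : R) :
  (forall j l, Cmod (Csub (z j) (z l)) <= D * (/ (INR j + 1) + / (INR l + 1))) ->
  exists lim, forall j, Cmod (Csub (z j) lim) <= 2 * D * / (INR j + 1).
Proof.
  intros H.
  destruct (R_complete_rate (fun j => fst (z j)) D) as [re Hre].
  { intros j l; eapply Rle_trans; [|apply (H j l)]; apply (Cmod_re_im (Csub (z j) (z l))). }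
  destruct (R_complete_rate (fun j => snd (z j)) D) as [im Him].
  { intros j l; eapply Rle_trans; [|apply (H j l)]; apply (Cmod_re_im (Csub (z j) (z l))). }
  exists (re, im); intros j.
  destruct (Cmod_re_im (Csub (z j) (re, im))) as (_ & _ & Hle).
  specialize (Hre j); specialize (Him j); simpl in *; lra.
Qed.

Definition lc (m : nat) (a : nat -> C) (u : nat -> seqC) : seqC :=
  fun n => Csum m (fun i => Cmul (a i) (u i n)).

Lemma lc_sub (m : nat) (a b : nat -> C) (u : nat -> seqC) (n : nat) :
  Csub (lc m a u n) (lc m b u n) = lc m (fun i => Csub (a i) (b i)) u n.
Proof. unfold lc; rewrite <- Csum_sub; apply Csum_ext; intros; unfold Csub, Cmul; ceq. Qed.

Lemma lc_scal (m : nat) (c : C) (a : nat -> C) (u : nat -> seqC) (n : nat) :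
  lc m (fun i => Cmul c (a i)) u n = Cmul c (lc m a u n).
Proof. unfold lc; rewrite <- Csum_scal; apply Csum_ext; intros; unfold Cmul; ceq. Qed.

Lemma bounded_ge0 (a : seqC) (M : R) : bounded_by a M -> 0 <= M.
Proof. intros H; pose proof (H O); pose proof (Cmod_ge0 (a O)); lra. Qed.

Lemma finite_upper_bound (f : nat -> R) (N : nat) :
  exists V, forall n, (n < N)%nat -> f n <= V.
Proof.
  induction N as [|N [V HV]]; [exists 0; intros; lia|].
  exists (Rmax V (f N)); intros n Hn.
  destruct (Nat.eq_dec n N) as [->|Hne]; [apply Rmax_r|].
  eapply Rle_trans; [apply HV; lia | apply Rmax_l].
Qed.

Lemma convergent_bounded (a : seqC) : convergent a -> exists V, 0 <= V /\ bounded_by a V.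
Proof.
  intros [l Hl]. destruct (Hl 1 ltac:(lra)) as [N HN].
  destruct (finite_upper_bound (fun n => Cmod (a n)) N) as [V HV].
  pose proof (Cmod_ge0 l).
  exists (Rmax (Cmod l + 1) V); split; [eapply Rle_trans; [|apply Rmax_l]; lra|].
  intros n. destruct (Compare_dec.le_lt_dec N n) as [Hn|Hn].
  - eapply Rle_trans; [|apply Rmax_l].
    pose proof (Cmod_sub_tri (a n) l C0) as Htri.
    replace (Csub (a n) C0) with (a n) in Htri by (unfold Csub, C0; ceq).
    replace (Csub l C0) with l in Htri by (unfold Csub, C0; ceq).
    specialize (HN n Hn); lra.
  - eapply Rle_trans; [apply (HV n Hn) | apply Rmax_r].
Qed.

Lemma uniform_cauchy_finite (u : nat -> seqC) :
  (forall i, convergent (u i)) ->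
  forall m e, 0 < e -> exists N, forall i n p, (i < m)%nat -> (N <= n)%nat -> (N <= p)%nat ->
    Cmod (Csub (u i n) (u i p)) <= e.
Proof.
  intros Hu m e He. induction m as [|m [N1 HN1]]; [exists O; intros; lia|].
  destruct (Hu m) as [l Hl]. destruct (Hl (e / 2)) as [N2 HN2]; [lra|].
  exists (Nat.max N1 N2); intros i n p Hi Hn Hp.
  destruct (Nat.eq_dec i m) as [->|Hne]; [|apply HN1; lia].
  eapply Rle_trans; [apply (Cmod_sub_tri _ l)|].
  rewrite (Cmod_sub_sym l).
  specialize (HN2 n ltac:(lia)) as h1; specialize (HN2 p ltac:(lia)) as h2; lra.
Qed.

Definition coord_bounded (m : nat) (u : nat -> seqC) (B : R) : Prop :=
  0 <= B /\ (forall i, convergent (u i)) /\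
  (forall a M, bounded_by (lc m a u) M -> forall i, (i < m)%nat -> Cmod (a i) <= B * M).

Section CoordBoundedFamily.

Variables (m : nat) (u : nat -> seqC) (B : R).
Hypothesis Hu : coord_bounded m u B.

Lemma coord_bounded_uniform_tail (d : R) : 0 < d -> exists N, forall a M,
  bounded_by (lc m a u) M -> forall n p, (N <= n)%nat -> (N <= p)%nat ->
  Cmod (Csub (lc m a u n) (lc m a u p)) <= d * M.
Proof.
  destruct Hu as (HB & Hconv & Hcoord). intros Hd.
  assert (HmB : 0 <= INR m * B) by (pose proof (pos_INR m); nra).
  set (e := d / (INR m * B + 1)).
  assert (He : 0 < e) by (unfold e; apply Rdiv_lt_0_compat; lra).
  destruct (uniform_cauchy_finite u Hconv m e He) as [N HN].
  exists N; intros a M Ha n p Hn Hp. pose proof (bounded_ge0 _ _ Ha) as HM.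
  (* each of the [m] terms moves by at most [|a_i| e <= B M e] *)
  assert (Hterm : forall i, (i < m)%nat ->
    Cmod (Csub (Cmul (a i) (u i n)) (Cmul (a i) (u i p))) <= B * M * e).
  { intros i Hi.
    replace (Csub (Cmul (a i) (u i n)) (Cmul (a i) (u i p)))
      with (Cmul (a i) (Csub (u i n) (u i p))) by (unfold Cmul, Csub; ceq).
    rewrite Cmod_mul; apply Rmult_le_compat; try apply Cmod_ge0; auto. }
  unfold lc; rewrite <- Csum_sub.
  eapply Rle_trans; [apply Cmod_Csum|].
  eapply Rle_trans; [apply (Rsum_le _ _ _ Hterm)|].
  rewrite Rsum_const.
  assert (Hde : e * (INR m * B + 1) = d) by (unfold e; field; lra).
  assert (0 <= M * e) by nra. nra.
Qed.

(* The coefficients of approximants at distance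
   [1/(j+1)] form Cauchy sequences, whose limits give the coordinates. *)
Lemma coord_bounded_span_closed (w : seqC) :
  (forall e, 0 < e -> exists b, bounded_by (fun n => Csub (w n) (lc m b u n)) e) ->
  exists al, forall n, w n = lc m al u n.
Proof.
  destruct Hu as (HB & Hconv & Hcoord). intros Happ.
  destruct (choice (fun j b => bounded_by (fun n => Csub (w n) (lc m b u n)) (/ (INR j + 1))))
    as [b Hb].
  { intro j; apply Happ, inv_succ_pos. }
  assert (Hdiff : forall i, (i < m)%nat -> forall j l,
     Cmod (Csub (b j i) (b l i)) <= B * (/ (INR j + 1) + / (INR l + 1))).
  { intros i Hi j l. apply (Hcoord (fun i => Csub (b j i) (b l i))); [|exact Hi].
    intro n. rewrite <- lc_sub.
    replace (Csub (lc m (b j) u n) (lc m (b l) u n)) with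
      (Csub (Csub (w n) (lc m (b l) u n)) (Csub (w n) (lc m (b j) u n))) by (unfold Csub; ceq).
    eapply Rle_trans; [apply Cmod_sub_le|].
    pose proof (Hb j n); pose proof (Hb l n); simpl in *; lra. }
  destruct (choice (fun i al => (i < m)%nat ->
      forall j, Cmod (Csub (b j i) al) <= 2 * B * / (INR j + 1))) as [al Hal].
  { intro i. destruct (Compare_dec.lt_dec i m) as [Hi|Hi].
    - destruct (C_complete_rate (fun j => b j i) B (Hdiff i Hi)) as [al Hal].
      exists al; intros _; exact Hal.
    - exists C0; intros; contradiction. }
  exists al; intro n. apply Cmod_sub_eq0, Rle_antisym; [|apply Cmod_ge0].
  apply (le_0_of_rate _ (1 + 2 * B * Rsum m (fun i => Cmod (u i n)))); intro j.
  eapply Rle_trans; [apply (Cmod_sub_tri _ (lc m (b j) u n))|].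
  rewrite lc_sub; unfold lc at 2.
  eapply Rle_trans; [apply Rplus_le_compat; [apply (Hb j n) | apply Cmod_Csum]|].
  eapply Rle_trans.
  { apply Rplus_le_compat_l.
    apply (Rsum_le _ _ (fun i => 2 * B * / (INR j + 1) * Cmod (u i n))).
    intros i Hi. rewrite Cmod_mul.
    apply Rmult_le_compat_r; [apply Cmod_ge0 | apply Hal; exact Hi]. }
  rewrite Rsum_scal; right; ring.
Qed.

End CoordBoundedFamily.

Definition adjoin (u : nat -> seqC) (m : nat) (w : seqC) : nat -> seqC :=
  fun i => if Nat.eqb i m then w else u i.

Lemma lc_adjoin (m : nat) (a : nat -> C) (u : nat -> seqC) (w : seqC) (n : nat) :
  lc (S m) a (adjoin u m w) n = Cadd (lc m a u n) (Cmul (a m) (w n)).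
Proof.
  unfold lc, adjoin; simpl; rewrite Nat.eqb_refl; f_equal.
  apply Csum_ext; intros i Hi.
  replace (Nat.eqb i m) with false by (symmetry; apply Nat.eqb_neq; lia); reflexivity.
Qed.

Definition separated (m : nat) (u : nat -> seqC) (w : seqC) (eta : R) : Prop :=
  forall b M, bounded_by (fun n => Csub (w n) (lc m b u n)) M -> eta <= M.

(* If [w] is [eta]-separated from the span of [u], the coefficient of [w] in
   [lc a u + c w] is controlled by its norm: [eta |c| <= ||lc a u + c w||]
   (divide by [c] to land at distance [eta] from the span). *)
Lemma separated_coeff_bound (m : nat) (u : nat -> seqC) (w : seqC) (eta : R)
    (a : nat -> C) (c : C) (M : R) :
  separated m u w eta ->
  bounded_by (fun n => Cadd (lc m a u n) (Cmul c (w n))) M -> eta * Cmod c <= M.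
Proof.
  intros Hsep HM. pose proof (bounded_ge0 _ _ HM) as HM0.
  destruct (Req_dec (Cmod c) 0) as [Hc0|Hc]; [rewrite Hc0; lra|].
  assert (Hcne : c <> C0) by (intros ->; apply Hc, Cmod_C0).
  set (t := Complex.Cinv c).
  assert (Ht : Cmul t c = (1, 0)) by exact (Complex.Cinv_l c Hcne).
  assert (Htc : Cmod t * Cmod c = 1) by (rewrite <- Cmod_mul, Ht, Cmod_real; apply Rabs_R1).
  assert (Hdist : eta <= Cmod t * M).
  { apply (Hsep (fun i => Cmul (Cmul (-1, 0) t) (a i))). intro n.
    rewrite lc_scal.
    replace (Csub (w n) (Cmul (Cmul (-1, 0) t) (lc m a u n)))
      with (Cmul t (Cadd (lc m a u n) (Cmul c (w n)))).
    - rewrite Cmod_mul; apply Rmult_le_compat_l; [apply Cmod_ge0 | apply HM].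
    - transitivity (Cadd (Cmul t (lc m a u n)) (Cmul (Cmul t c) (w n))); [ceq|].
      rewrite Ht; ceq. }
  pose proof (Cmod_ge0 c).
  apply (Rmult_le_compat_r (Cmod c)) in Hdist; [|assumption].
  replace (Cmod t * M * Cmod c) with (Cmod t * Cmod c * M) in Hdist by ring.
  rewrite Htc in Hdist; lra.
Qed.

Lemma coord_bounded_adjoin (m : nat) (u : nat -> seqC) (B : R) (w : seqC) (eta : R) :
  coord_bounded m u B -> convergent w -> 0 < eta -> separated m u w eta ->
  exists B', coord_bounded (S m) (adjoin u m w) B'.
Proof.
  intros (HB & Hconv & Hcoord) Hw Heta Hsep.
  destruct (convergent_bounded w Hw) as [V [HV0 HV]].
  pose proof (Rinv_0_lt_compat eta Heta) as Hs.
  exists (B * (1 + V * / eta) + / eta); split; [|split].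
  - assert (0 <= V * / eta) by nra. nra.
  - intro i; unfold adjoin; destruct (Nat.eqb i m); auto.
  - intros a M Ha i Hi. pose proof (bounded_ge0 _ _ Ha) as HM.
    assert (Ha' : bounded_by (fun n => Cadd (lc m a u n) (Cmul (a m) (w n))) M)
      by (intro n; rewrite <- lc_adjoin; apply Ha).
    assert (Ham : Cmod (a m) <= M * / eta).
    { pose proof (separated_coeff_bound m u w eta a (a m) M Hsep Ha') as Hsc.
      apply (Rmult_le_reg_l eta); [lra|].
      replace (eta * (M * / eta)) with M by (field; lra); exact Hsc. }
    assert (Hrest : bounded_by (lc m a u) (M + M * / eta * V)).
    { intro n.
      replace (lc m a u n) with
        (Csub (Cadd (lc m a u n) (Cmul (a m) (w n))) (Cmul (a m) (w n))) by (unfold Csub, Cadd; ceq).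
      eapply Rle_trans; [apply Cmod_sub_le|]. rewrite Cmod_mul.
      pose proof (Ha' n); pose proof (HV n); pose proof (Cmod_ge0 (a m)).
      assert (Cmod (a m) * Cmod (w n) <= M * / eta * V)
        by (apply Rmult_le_compat; auto; apply Cmod_ge0).
      simpl in *; lra. }
    assert (0 <= M * / eta) by nra.
    assert (0 <= V * / eta * M) by nra.
    destruct (Nat.eq_dec i m) as [->|Hne].
    + assert (0 <= B * (1 + V * / eta) * M) by nra. nra.
    + pose proof (Hcoord a _ Hrest i ltac:(lia)).
      replace (B * (M + M * / eta * V)) with (B * (1 + V * / eta) * M) in * by ring.
      nra.
Qed.

(* Either [w] is separated from the span (adjoin it), or it is approximable
   by the span and hence, the span being closed, already belongs to it. *)
Lemma coord_bounded_extend (m : nat) (u : nat -> seqC) (B : R) (w : seqC) :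
  coord_bounded m u B -> convergent w ->
  exists m' u' B', coord_bounded m' u' B' /\
    forall a c, exists a', forall n, Cadd (lc m a u n) (Cmul c (w n)) = lc m' a' u' n.
Proof.
  intros Hu Hw.
  destruct (classic (exists eta, 0 < eta /\ separated m u w eta)) as [[eta [Heta Hsep]]|Hnsep].
  - destruct (coord_bounded_adjoin m u B w eta Hu Hw Heta Hsep) as [B' HB'].
    exists (S m), (adjoin u m w), B'; split; [exact HB'|].
    intros a c. exists (fun i => if Nat.eqb i m then c else a i); intro n.
    rewrite lc_adjoin, Nat.eqb_refl; f_equal; apply Csum_ext; intros i Hi.
    replace (Nat.eqb i m) with false by (symmetry; apply Nat.eqb_neq; lia); reflexivity.
  - assert (Happ : forall e, 0 < e -> exists b, bounded_by (fun n => Csub (w n) (lc m b u n)) e).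
    { intros e He. apply NNPP; intro Hfar. apply Hnsep; exists e; split; [exact He|].
      intros b M HbM. apply Rnot_lt_le; intro HMe.
      apply Hfar; exists b; intro n; specialize (HbM n); simpl in *; lra. }
    destruct (coord_bounded_span_closed m u B Hu w Happ) as [al Hal].
    exists m, u, B; split; [exact Hu|].
    intros a c. exists (fun i => Cadd (a i) (Cmul c (al i))); intro n.
    rewrite Hal; unfold lc; rewrite <- Csum_scal, <- Csum_add.
    apply Csum_ext; intros; unfold Cmul, Cadd; ceq.
Qed.

Lemma finite_span_coord_bounded (k : nat) (v : nat -> seqC) :
  (forall i, convergent (v i)) ->
  exists m u B, coord_bounded m u B /\
    forall coef, exists a, forall n, lc k coef v n = lc m a u n.
Proof.
  intros Hv. induction k as [|k (m & u & B & Hu & Hspan)].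
  - exists O, v, 0; split.
    + split; [lra | split; [exact Hv | intros; lia]].
    + intros coef; exists coef; reflexivity.
  - destruct (coord_bounded_extend m u B (v k) Hu (Hv k)) as (m' & u' & B' & Hu' & Hext).
    exists m', u', B'; split; [exact Hu'|].
    intros coef. destruct (Hspan coef) as [a Ha]. destruct (Hext a (coef k)) as [a' Ha'].
    exists a'; intro n. rewrite <- Ha', <- Ha; reflexivity.
Qed.

Lemma finite_span_uniform_tail (k : nat) (v : nat -> seqC) :
  (forall i, convergent (v i)) ->
  forall d, 0 < d -> exists N, forall coef M, bounded_by (lc k coef v) M ->
    forall n p, (N <= n)%nat -> (N <= p)%nat ->
    Cmod (Csub (lc k coef v n) (lc k coef v p)) <= d * M.
Proof.
  intros Hv d Hd.
  destruct (finite_span_coord_bounded k v Hv) as (m & u & B & Hu & Hspan).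
  destruct (coord_bounded_uniform_tail m u B Hu d Hd) as [N HN].
  exists N; intros coef M HM n p Hn Hp.
  destruct (Hspan coef) as [a Ha].
  rewrite !Ha; apply HN; auto.
  intro j; rewrite <- Ha; apply HM.
Qed.

Lemma finite_rank_uniform_tail (S : seqC -> seqC) :
  bounded_on_c S -> finite_rank_on_c S ->
  forall d, 0 < d -> exists N, forall x, convergent x -> bounded_by x 1 ->
    forall n p, (N <= n)%nat -> (N <= p)%nat -> Cmod (Csub (S x n) (S x p)) <= d.
Proof.
  intros [K HK] (k & v & Hv & Hrange) d Hd.
  pose proof (Rabs_pos K) as HK0.
  destruct (finite_span_uniform_tail k v Hv (d / (Rabs K + 1))) as [N HN].
  { apply Rdiv_lt_0_compat; lra. }
  exists N; intros x Hx Hx1 n p Hn Hp.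
  destruct (Hrange x Hx) as [coef Hcoef].
  assert (HSx : bounded_by (lc k coef v) (Rabs K)).
  { intro j. unfold lc; rewrite <- Hcoef.
    pose proof (HK x Hx 1 Hx1 j); pose proof (Rle_abs K); lra. }
  rewrite !Hcoef; eapply Rle_trans; [apply (HN coef _ HSx n p Hn Hp)|].
  apply (Rmult_le_reg_r (Rabs K + 1)); [lra|].
  replace (d / (Rabs K + 1) * Rabs K * (Rabs K + 1)) with (d * Rabs K) by (field; lra).
  nra.
Qed.

Definition flip (N : nat) : seqC := fun j => if Nat.eqb j N then (-1, 0) else (1, 0).

Lemma flip_at (N : nat) : flip N N = (-1, 0).
Proof. unfold flip; rewrite Nat.eqb_refl; reflexivity. Qed.

Lemma flip_is_lim (N : nat) : is_lim (flip N) (1, 0).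
Proof.
  intros e He. exists (S N); intros n Hn. unfold flip.
  replace (Nat.eqb n N) with false by (symmetry; apply Nat.eqb_neq; lia).
  replace (Csub (1, 0) (1, 0)) with C0 by (unfold Csub, C0; ceq).
  rewrite Cmod_C0; exact He.
Qed.

Lemma flip_bounded (N : nat) : bounded_by (flip N) 1.
Proof.
  intro n; unfold flip; destruct (Nat.eqb n N); rewrite Cmod_real;
    [rewrite Rabs_left | rewrite Rabs_R1]; lra.
Qed.

(* Test [S - I] on [flip N] for [N] large: [(S x)_N] is within [r] of [-1],
   while [lim S x] is within [r0 < eps] of [1], and [S x] barely oscillates
   beyond [N]; so [2 = |1 - (-1)| <= r0 + (eps - r0) + r]. *)
Theorem mainTheorem7 (eps : R) (S : seqC -> seqC) :
  0 < eps ->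
  maps_c S -> linear_on_c S -> bounded_on_c S -> finite_rank_on_c S ->
  (exists r, r < eps /\ dual_defect_le S r) ->
  forall r, opnorm_le (minus_id S) r -> 2 - eps <= r.
Proof.
  intros Heps Hmaps _ Hbdd Hrank [r0 [Hr0 Hdual]] r Hr.
  set (d := eps - r0).
  destruct (finite_rank_uniform_tail S Hbdd Hrank (d / 2)) as [N Hosc]; [unfold d; lra|].
  pose proof (flip_is_lim N) as Hlim. pose proof (flip_bounded N) as Hx1.
  assert (Hx : convergent (flip N)) by (eexists; exact Hlim).
  destruct (Hmaps _ Hx) as [l' Hl'].
  pose proof (Hdual _ _ _ Hx Hlim Hl' 1 Hx1) as Hnear_lim.
  pose proof (Hr _ Hx 1 Hx1 N) as Hnear_N. unfold minus_id in Hnear_N; rewrite flip_at in Hnear_N.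
  destruct (Hl' (d / 2)) as [P HP]; [unfold d; lra|].
  set (p := Nat.max N P).
  specialize (Hosc _ Hx Hx1 p N ltac:(unfold p; lia) (le_n N)).
  specialize (HP p ltac:(unfold p; lia)).
  assert (Htwo : Cmod (Csub (1, 0) (-1, 0)) = 2).
  { replace (Csub (1, 0) (-1, 0)) with ((2, 0) : C) by (unfold Csub; ceq).
    rewrite Cmod_real, Rabs_right; lra. }
  pose proof (Cmod_sub_tri (1, 0) l' (-1, 0)) as T1.
  pose proof (Cmod_sub_tri l' (S (flip N) p) (-1, 0)) as T2.
  pose proof (Cmod_sub_tri (S (flip N) p) (S (flip N) N) (-1, 0)) as T3.
  rewrite (Cmod_sub_sym (1, 0) l') in T1. rewrite (Cmod_sub_sym l' (S (flip N) p)) in T2.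
  unfold d in *; lra.
Qed.
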